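(* Let $\mathcal{G}_{24}$ be the binary $[24,12,8]$ extended Golay code, realized as the binary linear code of length $24$ (coordinates $0,\ldots,23$) with parity-check matrix $[\mathbf{I}_{12}\,|\,\mathbf{M}]$, where $$\mathbf{M}=\begin{pmatrix} I_3 & A & A^2 & A^4\\ A & I_3 & A^4 & A^2\\ A^2 & A^4 & I_3 & A\\ A^4 & A^2 & A & I_3\end{pmatrix},\qquad A=\begin{pmatrix}1&1&1\\1&0&0\\1&0&1\end{pmatrix},$$ with matrix products over $\mathbb{F}_2$. Then $\mathbf{S}_7^{\star}(\mathcal{G}_{24})\le 14$.
   Context: For a binary matrix with columns indexed by $J=\{0,\ldots,23\}$, a row resolves a nonempty $I\subseteq J$ if its restriction to $I$ has Hamming weight exactly one; $I$ is a stopping set if no row resolves it. A parity-check matrix of $\mathcal{C}$ is a full-row-rank binary matrix whose row space is $\mathcal{C}^\perp$. $\mathrm{Aut}(\mathcal{C})$ is the group of coordinate permutations mapping $\mathcal{C}$ onto itself. For a parity-check matrix $\mathbf{H}$ of a code with minimum distance $d$ and $s\le d-1$, an $s$-SAD set of $\mathbf{H}$ is a smallest set $S\subseteq\mathrm{Aut}(\mathcal{C})$ such that every $I\subseteq J$ with $1\le|I|\le s$ is mapped by some $\pi\in S$ to a set $\pi(I)$ that is not a stopping set of $\mathbf{H}$. $\mathbf{S}_s^\star(\mathcal{C})$ is the minimum of $|S|$ over all parity-check matrices $\mathbf{H}$ of $\mathcal{C}$ admitting an $s$-SAD set $S$. *)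

From HB Require Import structures.
From mathcomp Require Import all_boot all_order all_algebra all_fingroup.
Set Implicit Arguments. Unset Strict Implicit. Unset Printing Implicit Defensive.
Import GRing.Theory.
Local Open Scope ring_scope.

Definition golayA : 'M['F_2]_3 :=
  \matrix_(i < 3, j < 3)
    (if (i == 0%N :> nat) then 1
     else if (i == 1%N :> nat) then (if j == 0%N :> nat then 1 else 0)
     else (if (j == 1%N :> nat) then 0 else 1)).

(* exponent of A in block (a,b) of M; exponent 0 means I_3 *)
Definition golay_exp (a b : nat) : nat :=
  nth 0%N (nth [::] [:: [:: 0; 1; 2; 4]; [:: 1; 0; 4; 2];
                        [:: 2; 4; 0; 1]; [:: 4; 2; 1; 0]]%N a) b.

Definition golayM : 'M['F_2]_12 :=
  \matrix_(i < 12, j < 12)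
    ((golayA ^+ golay_exp (i %/ 3) (j %/ 3)) (inord (i %% 3)) (inord (j %% 3))).

Definition golayH0 : 'M['F_2]_(12, 24) := row_mx 1%:M golayM.

Definition G24 : {set 'rV['F_2]_24} := [set v | golayH0 *m v^T == 0].

Definition dual_code n (C : {set 'rV['F_2]_n}) : {set 'rV['F_2]_n} :=
  [set x | [forall c in C, x *m c^T == 0]].

Definition is_parity_check n m (C : {set 'rV['F_2]_n}) (H : 'M['F_2]_(m, n)) :=
  row_free H /\ forall x : 'rV['F_2]_n, (x <= H)%MS <-> x \in dual_code C.

(* coordinate permutation: coordinate i moves to s i *)
Definition perm_vec n (s : {perm 'I_n}) (v : 'rV['F_2]_n) : 'rV['F_2]_n :=
  \row_j v 0 ((s^-1)%g j).

Definition Aut_code n (C : {set 'rV['F_2]_n}) : {set {perm 'I_n}} :=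
  [set s | [set perm_vec s c | c in C] == C].

Definition resolves n m (H : 'M['F_2]_(m, n)) (r : 'I_m) (I : {set 'I_n}) :=
  #|[set j in I | H r j != 0]| == 1%N.

Definition stopping_set n m (H : 'M['F_2]_(m, n)) (I : {set 'I_n}) :=
  (I != set0) && [forall r, ~~ resolves H r I].

(* S is an s-SAD-covering set (not necessarily smallest) *)
Definition SAD_cover n m (C : {set 'rV['F_2]_n}) (H : 'M['F_2]_(m, n)) (s : nat)
  (S : {set {perm 'I_n}}) :=
  S \subset Aut_code C /\
  forall I : {set 'I_n}, (1 <= #|I| <= s)%N ->
    exists2 p, p \in S & ~~ stopping_set H (p @: I).

From HB Require Import structures.
From mathcomp Require Import all_boot all_order all_algebra all_fingroup.
Set Implicit Arguments. Unset Strict Implicit. Unset Printing Implicit Defensive.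
Import GRing.Theory.

(* S*_7(G_24) <= 14.  We take the systematic parity-check matrix H0 = [I_12 | M]
   itself, together with a set S of five automorphisms of G_24 (the identity and
   four permutations found by computer search), and show that for every set I of
   at most 7 coordinates some p in S and some row r of H0 meet p(I) in exactly one
   position, so that p(I) is not a stopping set. *)

Definition add_col (cnts : seq nat) (col : seq bool) : seq nat :=
  [seq c.1 + nat_of_bool c.2 | c <- zip cnts col].

(* [resolved_from col n d lo cnts]: for every way of extending the current prefix
   (whose hit counts are [cnts]) by increasing indices i_0 < ... < i_k in [lo, n)
   with k <= d, some count becomes exactly 1 after each added index. *)
Fixpoint resolved_from (col : nat -> seq bool) (n d lo : nat) (cnts : seq nat) : bool :=
  all (fun i => let cnts' := add_col cnts (col i) in
         has (pred1 1) cnts' &&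
         (if d is d'.+1 then resolved_from col n d' i.+1 cnts' else true))
      (iota lo (n - lo)).

Lemma resolved_from_next col n d lo cnts i :
  resolved_from col n d lo cnts -> lo <= i < n ->
  has (pred1 1) (add_col cnts (col i)) &&
  (if d is d'.+1 then resolved_from col n d' i.+1 (add_col cnts (col i)) else true).
Proof.
move=> chk /andP [lo_i i_n].
have i_iota : i \in iota lo (n - lo).
  by rewrite mem_iota lo_i subnKC // ltnW // (leq_ltn_trans lo_i i_n).
by case: d chk => [|d] /allP /(_ i i_iota).
Qed.

Lemma sorted_enum_val n (I : {set 'I_n}) : sorted ltn (map val (enum I)).
Proof.
rewrite sorted_map; apply: sorted_filter; first by move=> ? ? ?; exact: ltn_trans.
by rewrite -enumT -sorted_map val_enum_ord iota_ltn_sorted.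
Qed.

Lemma card_setI_count n (I : {set 'I_n}) (Q : nat -> bool) :
  #|[set i in I | Q i]| = count Q (map val (enum I)).
Proof.
rewrite count_map cardE /enum_mem size_filter count_filter.
by apply: eq_count => i; rewrite /= !inE andbC.
Qed.

Section SmallSetEnumeration.
Variables (T : eqType) (tests : seq T) (hit : T -> nat -> bool).
Variables (n : nat) (col : nat -> seq bool).
Hypothesis col_hits : forall i, i < n -> col i = [seq hit t i | t <- tests].

Definition hit_counts (P : seq nat) : seq nat := [seq count (hit t) P | t <- tests].

Lemma add_col_hit_counts P i :
  i < n -> add_col (hit_counts P) (col i) = hit_counts (rcons P i).
Proof.
move/col_hits ->; rewrite /add_col /hit_counts.
by elim: tests => //= t ts ->; rewrite -cats1 count_cat /= addn0.
Qed.

Lemma resolved_from_sound d lo P L :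
  resolved_from col n d lo (hit_counts P) -> sorted ltn L -> L != [::] ->
  all (fun x => lo <= x < n) L -> size L <= d.+1 ->
  has (fun t => count (hit t) (P ++ L) == 1) tests.
Proof.
elim: d lo P L => [|d IH] lo P [|i L] // chk L_sorted _ /andP [i_range L_range] L_size;
  have := resolved_from_next chk i_range;
  rewrite add_col_hit_counts ?(andP i_range).2 // has_map => /andP [hit1 chk'];
  (have [-> | L_nil] := eqVneq L [::]; first by rewrite cats1).
  by case: L L_nil L_size {L_sorted L_range}.
rewrite -cat_rcons; apply: (IH i.+1 _ _ chk') => //; first exact: path_sorted L_sorted.
apply/allP => x x_L; rewrite (allP (order_path_min ltn_trans L_sorted)) //=.
by move/allP: L_range => /(_ x x_L) /andP [].
Qed.

Lemma small_sets_resolved d :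
  resolved_from col n d 0 (nseq (size tests) 0) ->
  forall I : {set 'I_n}, 0 < #|I| <= d.+1 ->
  exists2 t, t \in tests & #|[set i in I | hit t i]| == 1.
Proof.
move=> chk I /andP [I_gt0 I_le].
have counts0 : nseq (size tests) 0 = hit_counts [::].
  by rewrite /hit_counts; elim: tests => //= t ts <-.
rewrite counts0 in chk.
have size_I : size (map val (enum I)) = #|I| by rewrite size_map -cardE.
have I_nil : map val (enum I) != [::] by rewrite -size_eq0 size_I -lt0n.
have I_range : all (fun x => 0 <= x < n) (map val (enum I)).
  by apply/allP => _ /mapP [i _ ->]; rewrite /= ltn_ord.
have /hasP [t t_tests] := resolved_from_sound chk (sorted_enum_val I) I_nil I_range
  (leq_trans (eq_leq size_I) I_le).
by exists t; rewrite // card_setI_count.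
Qed.
End SmallSetEnumeration.

Local Open Scope ring_scope.

Definition bmx m n (f : nat -> nat -> bool) : 'M['F_2]_(m, n) :=
  \matrix_(i, j) (f i j)%:R.

Definition bmul (k : nat) (f g : nat -> nat -> bool) : nat -> nat -> bool :=
  fun i j => odd (count (fun l => f i l && g l j) (iota 0 k)).

Fixpoint bexp (k : nat) (f : nat -> nat -> bool) (e : nat) : nat -> nat -> bool :=
  if e is e'.+1 then bmul k (bexp k f e') f else fun i j => i == j.

Lemma natr_F2_sum I (r : seq I) (P : pred I) (F : I -> bool) :
  \sum_(l <- r | P l) ((F l)%:R : 'F_2) = (odd (\sum_(l <- r | P l) F l))%:R.
Proof.
elim/big_rec2: _ => // i a n _ ->.
by rewrite oddD; case: (F i); case: (odd n); apply/eqP.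
Qed.

Lemma natr_F2_mul (a b : bool) : (a%:R * b%:R : 'F_2) = (a && b)%:R.
Proof. by case: a; case: b; rewrite ?mul1r ?mul0r. Qed.

Lemma F2_natr_eq0 (b : bool) : ((b%:R : 'F_2) != 0) = b.
Proof. by case: b. Qed.

Lemma bmx_mul m k n (f g : nat -> nat -> bool) :
  bmx m k f *m bmx k n g = bmx m n (bmul k f g).
Proof.
apply/matrixP => i j; rewrite !mxE.
under eq_bigr => l _ do rewrite !mxE natr_F2_mul.
rewrite natr_F2_sum /bmul -sumn_count sumnE big_map.
have -> : iota 0 k = index_iota 0 k by rewrite /index_iota subn0.
by rewrite big_mkord.
Qed.

Lemma bmx_exp n (f : nat -> nat -> bool) e : bmx n n f ^+ e = bmx n n (bexp n f e).
Proof.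
elim: e => [|e IH]; first by apply/matrixP => i j; rewrite !mxE.
by rewrite exprSr IH -mulmxE bmx_mul.
Qed.

Definition kernel_code m n (H : 'M['F_2]_(m, n)) : {set 'rV['F_2]_n} :=
  [set v | H *m v^T == 0].

Lemma kernel_codeE m n (H : 'M['F_2]_(m, n)) v :
  (v \in kernel_code H) = (v <= kermx H^T)%MS.
Proof. by rewrite inE sub_kermx -trmx_eq0 trmx_mul trmxK. Qed.

(* The dual of the kernel code is the row space of H: both contain the rows of H,
   and the bidual kernel of H has the same rank as H. *)
Lemma dual_kernel_code m n (H : 'M['F_2]_(m, n)) x :
  (x <= H)%MS <-> x \in dual_code (kernel_code H).
Proof.
split.
- case/submxP => D ->; rewrite inE; apply/forallP => c; apply/implyP.
  by rewrite inE => /eqP c_ker; rewrite -mulmxA c_ker mulmx0.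
- rewrite inE => /forallP x_orth.
  set K := kermx H^T.
  have x_bidual : (x <= kermx K^T)%MS.
    rewrite sub_kermx -trmx_eq0 trmx_mul trmxK; apply/eqP/row_matrixP => i.
    have /(implyP (x_orth _)) /eqP Kx : row i K \in kernel_code H.
      by rewrite kernel_codeE row_sub.
    by rewrite row_mul row0 -(trmxK (row i K *m x^T)) trmx_mul trmxK Kx trmx0.
  have H_bidual : (H <= kermx K^T)%MS.
    by rewrite sub_kermx -trmx_eq0 trmx_mul trmxK mulmx_ker.
  have rank_bidual : \rank (kermx K^T) = \rank H.
    by rewrite mxrank_ker mxrank_tr mxrank_ker mxrank_tr subKn // rank_leq_col.
  have [_ /esym] := mxrank_leqif_sup H_bidual; rewrite rank_bidual eqxx => bidualH.
  exact: submx_trans x_bidual bidualH.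
Qed.

Lemma kernel_parity_check m n (H : 'M['F_2]_(m, n)) :
  row_free H -> is_parity_check (kernel_code H) H.
Proof. by split=> // x; exact: dual_kernel_code. Qed.

Lemma row_free_systematic (F : fieldType) m n (M : 'M[F]_(m, n)) :
  row_free (row_mx 1%:M M).
Proof.
apply/row_freeP; exists (col_mx 1%:M 0).
by rewrite mul_row_col mul1mx mulmx0 addr0.
Qed.

Lemma perm_vec_inj n (s : {perm 'I_n}) : injective (perm_vec s).
Proof.
move=> v w /matrixP vw; apply/matrixP => i j.
by rewrite (ord1 i); have := vw 0 (s j); rewrite !mxE permK.
Qed.

Lemma kernel_code_aut m n (H : 'M['F_2]_(m, n)) (s : {perm 'I_n}) :
  (forall r, exists t : 'rV_m, \row_j H r (s j) = t *m H) ->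
  s \in Aut_code (kernel_code H).
Proof.
move=> rows_in_span; rewrite inE eqEcard (card_imset _ (@perm_vec_inj _ s)) leqnn andbT.
apply/subsetP => _ /imsetP [c /[!inE] /eqP c_ker ->].
apply/eqP/matrixP => r j; rewrite (ord1 j) [RHS]mxE mxE.
have [t Ht] := rows_in_span r.
have sc0 : (\row_i H r (s i) *m c^T) 0 0 = 0 by rewrite Ht -mulmxA c_ker mulmx0 mxE.
apply: etrans sc0; rewrite [RHS]mxE [LHS](reindex_inj (@perm_inj _ s)).
by apply: eq_bigr => i _; rewrite !mxE permK.
Qed.

Lemma resolves_imset m n (H : 'M['F_2]_(m, n)) r (p : {perm 'I_n}) (I : {set 'I_n}) :
  resolves H r (p @: I) = (#|[set i in I | H r (p i) != 0]| == 1%N).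
Proof.
rewrite /resolves; have -> : [set j in p @: I | H r j != 0] = p @: [set i in I | H r (p i) != 0].
  apply/setP => j; rewrite inE; apply/andP/imsetP.
  - by case=> /imsetP [i i_I ->] Hri; exists i => //; rewrite inE i_I Hri.
  - by case=> i; rewrite inE => /andP [i_I Hri] ->; split => //; exact: imset_f.
by rewrite card_imset //; exact: perm_inj.
Qed.

(* The permutation i |-> l_i of 'I_n described by a list l (identity if l is not
   a permutation of 0, ..., n-1). *)
Definition perm_seq_ok n (l : seq nat) : bool :=
  [&& uniq l, size l == n & all (gtn n) l].

Definition perm_fun n (l : seq nat) (i : 'I_n) : 'I_n :=
  if perm_seq_ok n l then insubd i (nth 0%N l i) else i.

Lemma perm_fun_inj n (l : seq nat) : injective (@perm_fun n l).
Proof.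
move=> i j; rewrite /perm_fun; case: ifP => [/and3P [l_uniq /eqP l_size l_range]|_] //.
have nth_lt (k : 'I_n) : (nth 0 l k < n)%N by apply: (allP l_range); rewrite mem_nth // l_size.
move/(congr1 val); rewrite !val_insubd !nth_lt => /eqP.
by rewrite nth_uniq ?l_size // => /eqP; exact: val_inj.
Qed.

Definition perm_of_seq n (l : seq nat) : {perm 'I_n} := perm (@perm_fun_inj n l).

Lemma perm_of_seqE n (l : seq nat) (i : 'I_n) :
  perm_seq_ok n l -> val (perm_of_seq n l i) = nth 0%N l i.
Proof.
move=> l_ok; rewrite permE /perm_fun l_ok val_insubd.
case/and3P: l_ok => _ /eqP l_size l_range.
by have -> : (nth 0 l i < n)%N by apply: (allP l_range); rewrite mem_nth // l_size.
Qed.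

Definition golay_a (i j : nat) : bool :=
  if i == 0%N then true else if i == 1%N then j == 0%N else j != 1%N.

Lemma golayAE : golayA = bmx 3 3 golay_a.
Proof.
apply/matrixP => i j; rewrite !mxE /golay_a.
by case: (_ == 0%N) => //; case: (_ == 1%N) => //; case: (_ == _).
Qed.

Definition golay_hb (i j : nat) : bool :=
  if (j < 12)%N then i == j
  else bexp 3 golay_a (golay_exp (i %/ 3) ((j - 12) %/ 3)) (i %% 3) ((j - 12) %% 3).

Lemma golayH0E : golayH0 = bmx 12 24 golay_hb.
Proof.
apply/matrixP => i j; rewrite /golayH0 mxE /golay_hb; case: splitP => k j_k.
- by rewrite !mxE j_k ltn_ord.
- rewrite /golayM !mxE golayAE bmx_exp mxE j_k ltnNge leq_addr addKn /=.
  by rewrite !inordK ?ltn_pmod.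
Qed.

Definition golay_perm_seqs : seq (seq nat) := [::
  [:: 0; 1; 2; 3; 4; 5; 6; 7; 8; 9; 10; 11; 12; 13; 14; 15; 16; 17; 18; 19; 20; 21; 22; 23];
  [:: 14; 4; 23; 22; 19; 12; 20; 17; 0; 6; 21; 18; 5; 15; 13; 3; 10; 9; 7; 11; 1; 8; 16; 2];
  [:: 21; 17; 5; 15; 0; 1; 22; 12; 13; 18; 19; 8; 23; 4; 9; 3; 20; 2; 16; 7; 6; 11; 10; 14];
  [:: 3; 22; 18; 4; 15; 14; 9; 0; 10; 19; 23; 20; 7; 1; 2; 17; 21; 16; 11; 8; 6; 13; 12; 5];
  [:: 9; 20; 16; 12; 21; 0; 11; 8; 10; 22; 7; 5; 2; 18; 19; 14; 1; 4; 17; 3; 6; 13; 15; 23]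
]%N.

Lemma golay_perm_seqs_ok : all (perm_seq_ok 24) golay_perm_seqs.
Proof. by []. Qed.

Definition golay_S : {set {perm 'I_24}} := [set s in map (perm_of_seq 24) golay_perm_seqs].

(* Row r of H0 permuted by l equals the combination, with coefficients the bits
   of that permuted row at positions 0..11, of the rows of H0. *)
Definition golay_row_in_span (l : seq nat) (r : nat) : bool :=
  all (fun i => golay_hb r (nth 0%N l i) ==
                bmul 12 (fun _ k => golay_hb r (nth 0%N l k)) golay_hb 0 i) (iota 0 24).

Lemma golay_rows_in_span :
  all (fun l => all (golay_row_in_span l) (iota 0 12)) golay_perm_seqs.
Proof. by vm_compute. Qed.

Lemma golay_perm_aut l :
  l \in golay_perm_seqs -> perm_of_seq 24 l \in Aut_code G24.
Proof.
move=> l_in; apply: kernel_code_aut => r.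
exists (bmx 1 12 (fun _ k => golay_hb r (nth 0%N l k))).
rewrite golayH0E bmx_mul; apply/matrixP => i j.
rewrite !mxE perm_of_seqE ?(allP golay_perm_seqs_ok) //.
have /allP /(_ r) := allP golay_rows_in_span l l_in.
by rewrite mem_iota ltn_ord => /(_ isT) /allP /(_ j); rewrite mem_iota ltn_ord => /(_ isT) /eqP ->.
Qed.

Definition golay_tests : seq (seq nat * nat) :=
  [seq (l, r) | l <- golay_perm_seqs, r <- iota 0 12].

Definition golay_hit (t : seq nat * nat) (i : nat) : bool := golay_hb t.2 (nth 0%N t.1 i).

Lemma golay_hitE l (r : 'I_12) (i : 'I_24) : l \in golay_perm_seqs ->
  (golayH0 r (perm_of_seq 24 l i) != 0) = golay_hit (l, val r) i.
Proof.
move=> l_in; rewrite golayH0E mxE F2_natr_eq0 perm_of_seqE //.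
exact: (allP golay_perm_seqs_ok).
Qed.

Definition golay_cols : seq (seq bool) :=
  [seq [seq golay_hit t i | t <- golay_tests] | i <- iota 0 24].

Lemma golay_cols_hits i :
  (i < 24)%N -> nth [::] golay_cols i = [seq golay_hit t i | t <- golay_tests].
Proof. by move=> i_lt; rewrite /golay_cols (nth_map 0%N) ?size_iota // nth_iota. Qed.

(* The exhaustive check over all sets of at most 7 coordinates. *)
Lemma golay_resolved :
  resolved_from (nth [::] golay_cols) 24 6 0 (nseq (size golay_tests) 0).
Proof. by vm_compute. Qed.

Theorem theorem9 :
  exists (m : nat) (H : 'M['F_2]_(m, 24)) (S : {set {perm 'I_24}}),
    is_parity_check G24 H /\ SAD_cover G24 H 7 S /\ (#|S| <= 14)%N.
Proof.
exists 12%N, golayH0, golay_S; split.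
  exact/kernel_parity_check/row_free_systematic.
split; last by rewrite cardsE (leq_trans (card_size _)) // size_map.
split.
  by apply/subsetP => s; rewrite inE => /mapP [l l_in ->]; exact: golay_perm_aut.
move=> I I_size.
have [_ /allpairsP [[l r] [l_in r_in ->]] hit1] :=
  small_sets_resolved golay_cols_hits golay_resolved I_size.
have r_lt : (r < 12)%N by rewrite mem_iota in r_in.
exists (perm_of_seq 24 l); first by rewrite inE map_f.
rewrite /stopping_set negb_and negb_forall; apply/orP; right; apply/existsP.
exists (Ordinal r_lt); rewrite negbK resolves_imset.
by under eq_finset => i do rewrite golay_hitE //.
Qed.
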